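(* Let $A\in\mathbb{R}^{n\times n}$ be symmetric positive-semidefinite, $b\in\mathbb{R}^n$, $g:\mathbb{R}^n\to(-\infty,\infty]$ proper, lower semicontinuous and convex, and $\gamma>0$ such that $I-\gamma A$ is positive-definite. Set $Q:=(I-\gamma A)^{-1}$, $c:=\gamma Qb$, $P:=Q-I$, and $\psi(u):=\frac12\langle Pu,u\rangle+\langle c,u\rangle+\gamma e_\gamma g(u)$. Then for all $u,w,z\in\mathbb{R}^n$: $z\in\partial^2\psi(u)(w)$ if and only if $\frac1\gamma(z-Pw)\in\partial^2g\Big(\operatorname{Prox}_{\gamma g}(u),\frac1\gamma\big(u-\operatorname{Prox}_{\gamma g}(u)\big)\Big)(Qw-z)$.
   Context: Moreau envelope and proximal map: $e_\gamma g(x):=\inf_y\{g(y)+\frac1{2\gamma}\|y-x\|^2\}$, $\operatorname{Prox}_{\gamma g}(x):=\operatorname{argmin}_y\{g(y)+\frac1{2\gamma}\|y-x\|^2\}$ ($\psi$ is continuously differentiable). Regular normal cone: $\widehat N_\Omega(\bar z):=\{v\mid \limsup_{z\to\bar z,\,z\in\Omega}\langle v,z-\bar z\rangle/\|z-\bar z\|\le 0\}$; limiting normal cone $N_\Omega(\bar z)$: all $v$ with $z_k\to\bar z$, $z_k\in\Omega$, $v_k\to v$, $v_k\in\widehat N_\Omega(z_k)$. Coderivative of $F:\mathbb{R}^n\rightrightarrows\mathbb{R}^m$: $D^*F(\bar x,\bar y)(v):=\{u\mid(u,-v)\in N_{\operatorname{gph}F}(\bar x,\bar y)\}$. Second-order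 subdifferential: for $\bar v\in\partial g(\bar x)$ (convex subdifferential), $\partial^2g(\bar x,\bar v)(w):=D^*(\partial g)(\bar x,\bar v)(w)$; for the $\mathcal{C}^1$ function $\psi$, $\partial^2\psi(u)(w):=D^*(\nabla\psi)(u,\nabla\psi(u))(w)$. *)

From HB Require Import structures.
From mathcomp Require Import all_boot all_order all_algebra.
From mathcomp Require Import all_classical all_reals all_analysis.
Set Implicit Arguments.
Unset Strict Implicit.
Unset Printing Implicit Defensive.
Import Order.TTheory GRing.Theory Num.Theory.
Local Open Scope classical_set_scope.
Local Open Scope ring_scope.

Section Defs.
Variables (R : realType) (n : nat).
Local Notation V := 'cV[R]_n.

Definition dot (u v : V) : R := \sum_(i < n) u i 0 * v i 0.
Definition enorm (u : V) : R := Num.sqrt (dot u u).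

Definition dot2 (p q : V * V) : R := dot p.1 q.1 + dot p.2 q.2.
Definition enorm2 (p : V * V) : R := Num.sqrt (dot2 p p).
Definition sub2 (p q : V * V) : V * V := (p.1 - q.1, p.2 - q.2).

Definition sym_mx (A : 'M[R]_n) : Prop := A^T = A.
Definition psd (A : 'M[R]_n) : Prop := forall x : V, 0 <= dot x (A *m x).
Definition pd (A : 'M[R]_n) : Prop := forall x : V, x != 0 -> 0 < dot x (A *m x).

Definition proper_fun (g : V -> \bar R) : Prop :=
  (exists x, g x < +oo)%E /\ (forall x, -oo < g x)%E.
Definition lsc (g : V -> \bar R) : Prop :=
  forall x (a : R), (a%:E < g x)%E ->
    exists2 d : R, 0 < d & forall y : V, enorm (y - x) < d -> (a%:E < g y)%E.
Definition convex_fun (g : V -> \bar R) : Prop :=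
  forall (x y : V) (t : R), 0 <= t <= 1 ->
    (g (t *: x + (1 - t) *: y)%R <= t%:E * g x + (1 - t)%:E * g y)%E.

Definition subdiff (g : V -> \bar R) (x v : V) : Prop :=
  g x \is a fin_num /\ forall y, (g x + (dot v (y - x)%R)%:E <= g y)%E.

Definition moreau (gamma : R) (g : V -> \bar R) (x : V) : \bar R :=
  ereal_inf (range (fun y => g y + ((2 * gamma)^-1 * enorm (y - x) ^+ 2)%R%:E)%E).
Definition prox (gamma : R) (g : V -> \bar R) (x : V) : V :=
  xget 0 [set p | forall y,
    (g p + ((2 * gamma)^-1 * enorm (p - x) ^+ 2)%R%:E <=
     g y + ((2 * gamma)^-1 * enorm (y - x) ^+ 2)%R%:E)%E].

Definition is_grad (f : V -> R) (x v : V) : Prop :=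
  forall eps : R, 0 < eps -> exists2 d : R, 0 < d & forall h : V,
    enorm h < d -> `|f (x + h) - f x - dot v h| <= eps * enorm h.
Definition grad (f : V -> R) (x : V) : V := xget 0 [set v | is_grad f x v].

Definition reg_normal (Om : set (V * V)) (zb v : V * V) : Prop :=
  forall eps : R, 0 < eps -> exists2 d : R, 0 < d & forall z, Om z ->
    enorm2 (sub2 z zb) < d -> dot2 v (sub2 z zb) <= eps * enorm2 (sub2 z zb).

Definition cvg2 (s : nat -> V * V) (l : V * V) : Prop :=
  forall eps : R, 0 < eps -> exists N, forall k, (N <= k)%N ->
    enorm2 (sub2 (s k) l) < eps.

Definition lim_normal (Om : set (V * V)) (zb v : V * V) : Prop :=
  exists (zs vs : nat -> V * V),
    (forall k, Om (zs k)) /\ (forall k, reg_normal Om (zs k) (vs k)) /\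
    cvg2 zs zb /\ cvg2 vs v.

Definition coderiv (gphF : set (V * V)) (x y v u : V) : Prop :=
  lim_normal gphF (x, y) (u, - v).

Definition sub2diff (g : V -> \bar R) (x vb w z : V) : Prop :=
  coderiv [set p | subdiff g p.1 p.2] x vb w z.
Definition hess2 (f : V -> R) (u w z : V) : Prop :=
  coderiv [set p | p.2 = grad f p.1] u (grad f u) w z.

End Defs.

From HB Require Import structures.
From mathcomp Require Import all_boot all_order all_algebra.
From mathcomp Require Import all_classical all_reals all_analysis.
From mathcomp Require Import ring lra.
Import Order.TTheory GRing.Theory Num.Theory.
Local Open Scope classical_set_scope.
Local Open Scope ring_scope.
Import numFieldNormedType.Exports.
Set Implicit Arguments.
Unset Strict Implicit.
Unset Printing Implicit Defensive.

(* The proximal objective [y |-> g y + |y - u|^2 / (2 gamma)] is strongly convex, so it has a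
   unique minimizer [prox u] and the Moreau envelope [e u] satisfies
   [0 <= e (u + h) - e u - <(u - prox u) / gamma, h> <= |h|^2 / (2 gamma)]; hence [psi] is
   differentiable with [grad psi u = Q u + c - prox u].
   Moreover [v] is a subgradient of [g] at [p] exactly when [p = prox (p + gamma v)], so the
   affine bijection [(u, y) |-> (Q u + c - y, (u - Q u - c + y) / gamma)], with inverse
   [(p, v) |-> (p + gamma v, Q (p + gamma v) + c - p)], maps the graph of [grad psi] onto the
   graph of [subdiff g].  A bi-Lipschitz bijection [F] between two sets whose inverse has linear
   part [L] carries limiting normals [v] at [z] to limiting normals [L^T v] at [F z]; applied to
   the normal [(z, -w)] and rescaled by [1 / gamma], this is [((z - P w) / gamma, -(Q w - z))],
   which is the coderivative relation of the statement. *)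

(** * Euclidean structure on column vectors *)

Section Euclid.
Variables (R : realType) (n : nat).
Local Notation V := 'cV[R]_n.
Implicit Types (u v w : V) (M : 'M[R]_n).

Lemma dotC u v : dot u v = dot v u.
Proof. by apply: eq_bigr => i _; rewrite mulrC. Qed.

Lemma dotDl u v w : dot (u + v) w = dot u w + dot v w.
Proof. by rewrite /dot -big_split; apply: eq_bigr => i _; rewrite !mxE mulrDl. Qed.

Lemma dotDr u v w : dot w (u + v) = dot w u + dot w v.
Proof. by rewrite dotC dotDl !(dotC w). Qed.

Lemma dotZl a u v : dot (a *: u) v = a * dot u v.
Proof. by rewrite /dot mulr_sumr; apply: eq_bigr => i _; rewrite !mxE mulrA. Qed.

Lemma dotZr a u v : dot v (a *: u) = a * dot v u.
Proof. by rewrite dotC dotZl dotC. Qed.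

Lemma dotNl u v : dot (- u) v = - dot u v.
Proof. by rewrite -scaleN1r dotZl mulN1r. Qed.

Lemma dotNr u v : dot v (- u) = - dot v u.
Proof. by rewrite dotC dotNl dotC. Qed.

Lemma dotBl u v w : dot (u - v) w = dot u w - dot v w.
Proof. by rewrite dotDl dotNl. Qed.

Lemma dotBr u v w : dot w (u - v) = dot w u - dot w v.
Proof. by rewrite dotDr dotNr. Qed.

Lemma dot0l u : dot 0 u = 0.
Proof. by rewrite /dot big1 // => i _; rewrite mxE mul0r. Qed.

Lemma dot0r u : dot u 0 = 0.
Proof. by rewrite dotC dot0l. Qed.

Lemma dotvv_ge0 u : 0 <= dot u u.
Proof. by rewrite sumr_ge0 // => i _; rewrite -expr2 sqr_ge0. Qed.

Lemma dotvv_eq0 u : dot u u = 0 -> u = 0.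
Proof.
move/eqP; rewrite psumr_eq0 => [/allP u0|i _]; last by rewrite -expr2 sqr_ge0.
apply/matrixP => i j; rewrite (ord1 j) mxE.
by have := u0 i (mem_index_enum _); rewrite mulf_eq0 orbb => /eqP.
Qed.

Lemma dot_mulmx M u v : dot (M *m u) v = dot u (M^T *m v).
Proof.
rewrite /dot; under eq_bigr do rewrite !mxE big_distrl /=.
rewrite exchange_big /=; apply: eq_bigr => j _.
by rewrite !mxE big_distrr /=; apply: eq_bigr => i _; rewrite !mxE; ring.
Qed.

Lemma dot_sqr_le u v : dot u v ^+ 2 <= dot u u * dot v v.
Proof.
have [/dotvv_eq0 ->|vv0] := eqVneq (dot v v) 0; first by rewrite dot0r dot0l expr0n mulr0.
have vv_gt0 : 0 < dot v v by rewrite lt_def vv0 dotvv_ge0.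
have := dotvv_ge0 (dot v v *: u - dot u v *: v).
rewrite !(dotBl, dotBr, dotZl, dotZr) (dotC v u) => ge0.
suff : 0 <= dot v v * (dot u u * dot v v - dot u v ^+ 2) by rewrite pmulr_rge0 // subr_ge0.
by apply: (le_trans ge0); rewrite le_eqVlt; apply/orP; left; apply/eqP; ring.
Qed.

Lemma enorm_ge0 u : 0 <= enorm u.
Proof. exact: sqrtr_ge0. Qed.

Lemma enorm_sqr u : enorm u ^+ 2 = dot u u.
Proof. by rewrite sqr_sqrtr // dotvv_ge0. Qed.

Lemma enorm_eq0 u : enorm u = 0 -> u = 0.
Proof. by move=> u0; apply: dotvv_eq0; rewrite -enorm_sqr u0 expr0n. Qed.

Lemma normr_dot_le u v : `|dot u v| <= enorm u * enorm v.
Proof.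
rewrite -[leRHS]ger0_norm ?mulr_ge0 ?enorm_ge0 // -ler_sqr ?normr_ge0 //.
by rewrite !real_normK ?num_real // exprMn !enorm_sqr dot_sqr_le.
Qed.

Lemma dot_le u v : dot u v <= enorm u * enorm v.
Proof. exact: le_trans (ler_norm _) (normr_dot_le u v). Qed.

Lemma enormD u v : enorm (u + v) <= enorm u + enorm v.
Proof.
rewrite -ler_sqr ?nnegrE ?addr_ge0 ?enorm_ge0 //.
rewrite enorm_sqr dotDl !dotDr (dotC v u) sqrrD !enorm_sqr.
have := dot_le u v; lra.
Qed.

Lemma enormZ a u : enorm (a *: u) = `|a| * enorm u.
Proof. by rewrite /enorm dotZl dotZr mulrA -expr2 sqrtrM ?sqr_ge0 // sqrtr_sqr. Qed.

Lemma enormN u : enorm (- u) = enorm u.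
Proof. by rewrite -scaleN1r enormZ normrN1 mul1r. Qed.

Lemma normr_coord_le u i : `|u i 0| <= enorm u.
Proof.
rewrite -[leRHS]ger0_norm ?enorm_ge0 // -ler_sqr ?normr_ge0 //.
rewrite !real_normK ?num_real // enorm_sqr /dot (bigD1 i) //= -expr2 lerDl.
by rewrite sumr_ge0 // => j _; rewrite -expr2 sqr_ge0.
Qed.

Lemma enorm_le_sum u : enorm u <= \sum_i `|u i 0|.
Proof.
rewrite -ler_sqr ?nnegrE ?enorm_ge0 ?sumr_ge0 // enorm_sqr /dot.
rewrite expr2 mulr_suml; apply: ler_sum => i _.
by rewrite mulr_sumr (bigD1 i) //= -normrM ler_wpDr ?ler_norm ?sumr_ge0.
Qed.

Lemma enorm_combo_sqr (t : R) u v w :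
  enorm (t *: u + (1 - t) *: v - w) ^+ 2 =
  t * enorm (u - w) ^+ 2 + (1 - t) * enorm (v - w) ^+ 2 - t * (1 - t) * enorm (u - v) ^+ 2.
Proof.
rewrite !enorm_sqr /dot !mulr_sumr -big_split /= -sumrB.
by apply: eq_bigr => i _; rewrite !mxE; ring.
Qed.

(* [K] is the Frobenius norm of [M]: Cauchy-Schwarz row by row. *)
Lemma enorm_mulmx_le M : exists2 K, 0 <= K & forall u, enorm (M *m u) <= K * enorm u.
Proof.
exists (Num.sqrt (\sum_i dot (row i M)^T (row i M)^T)); first exact: sqrtr_ge0.
move=> u; have rows_ge0 i : true -> 0 <= dot (row i M)^T (row i M)^T.
  by move=> _; exact: dotvv_ge0.
rewrite /enorm -sqrtrM ?sumr_ge0 // ler_sqrt ?mulr_ge0 ?dotvv_ge0 ?sumr_ge0 //.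
rewrite {1}/dot mulr_suml; apply: ler_sum => i _.
have -> : (M *m u) i 0 = dot (row i M)^T u.
  by rewrite !mxE /dot; apply: eq_bigr => j _; rewrite !mxE.
by rewrite -expr2 dot_sqr_le.
Qed.

Lemma enorm_cauchy_cvg (ys : nat -> V) :
  (forall e, 0 < e -> exists N, forall j k, (N <= j)%N -> (N <= k)%N ->
     enorm (ys j - ys k) < e) ->
  exists l, forall e, 0 < e -> exists N, forall k, (N <= k)%N -> enorm (ys k - l) < e.
Proof.
move=> ys_cauchy.
have coord_cvg i : cvg ((fun k => ys k i 0) @ \oo).
  apply: cauchy_cvg; apply/cauchy_exP => e e0; have [N ysN] := ys_cauchy e e0.
  exists (ys N i 0), N => // k /= Nk; have := normr_coord_le (ys N - ys k) i.
  by rewrite !mxE => /le_lt_trans; apply; exact: ysN.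
exists (\col_i lim ((fun k => ys k i 0) @ \oo)) => e e0.
have en_gt0 : 0 < e / n.+1%:R by rewrite divr_gt0.
have [N _ ysN] : \forall k \near \oo, forall i,
    `|lim ((fun k => ys k i 0) @ \oo) - ys k i 0| < e / n.+1%:R.
  by apply: filter_forall => i; move/cvgrPdist_lt: (coord_cvg i); apply.
exists N => k Nk; apply: le_lt_trans (enorm_le_sum _) _.
apply: (@le_lt_trans _ _ (\sum_(i < n) e / n.+1%:R)).
  by apply: ler_sum => i _; rewrite !mxE distrC ltW // ysN.
rewrite sumr_const card_ord -[_ *+ n]mulr_natr mulrAC ltr_pdivrMr // ltr_pM2l //.
by rewrite ltr_nat.
Qed.

End Euclid.

(** * Normal cones under bi-Lipschitz bijections *)

Section Pairs.
Variables (R : realType) (n : nat).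
Local Notation V := 'cV[R]_n.
Implicit Types (p q : V * V).

Lemma dot2vv_ge0 p : 0 <= dot2 p p.
Proof. by rewrite addr_ge0 ?dotvv_ge0. Qed.

Lemma enorm_fst_le p : enorm p.1 <= enorm2 p.
Proof. by rewrite ler_sqrt ?dot2vv_ge0 // lerDl dotvv_ge0. Qed.

Lemma enorm_snd_le p : enorm p.2 <= enorm2 p.
Proof. by rewrite ler_sqrt ?dot2vv_ge0 // lerDr dotvv_ge0. Qed.

Lemma enorm2_le p : enorm2 p <= enorm p.1 + enorm p.2.
Proof.
rewrite -ler_sqr ?nnegrE ?addr_ge0 ?enorm_ge0 ?sqrtr_ge0 //.
rewrite sqr_sqrtr ?dot2vv_ge0 // sqrrD !enorm_sqr /dot2.
have := mulr_ge0 (enorm_ge0 p.1) (enorm_ge0 p.2); lra.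
Qed.

Definition lipschitz2 (f : V * V -> V * V) : Prop :=
  exists2 K, 0 < K & forall a b, enorm2 (sub2 (f a) (f b)) <= K * enorm2 (sub2 a b).

Definition blockmul (A B C D : 'M[R]_n) q : V * V :=
  (A *m q.1 + B *m q.2, C *m q.1 + D *m q.2).

Lemma lipschitz2_blockmul (f : V * V -> V * V) A B C D :
  (forall a b, sub2 (f a) (f b) = blockmul A B C D (sub2 a b)) -> lipschitz2 f.
Proof.
move=> fE; have [KA KA0 HA] := enorm_mulmx_le A; have [KB KB0 HB] := enorm_mulmx_le B.
have [KC KC0 HC] := enorm_mulmx_le C; have [KD KD0 HD] := enorm_mulmx_le D.
exists (KA + KB + KC + KD + 1) => [|a b]; first lra.
rewrite fE; set q := sub2 a b; apply: le_trans (enorm2_le _) _ => /=.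
have := le_trans (enormD _ _) (lerD (HA q.1) (HB q.2)).
have := le_trans (enormD _ _) (lerD (HC q.1) (HD q.2)).
have := ler_wpM2l KA0 (enorm_fst_le q); have := ler_wpM2l KB0 (enorm_snd_le q).
have := ler_wpM2l KC0 (enorm_fst_le q); have := ler_wpM2l KD0 (enorm_snd_le q).
have := sqrtr_ge0 (dot2 q q); rewrite -/(enorm2 q); lra.
Qed.

Section NormalConeTransfer.
Variables (Om Om' : set (V * V)) (F G T : V * V -> V * V) (mu : R).
Hypotheses (mu_gt0 : 0 < mu) (FOm : forall z, Om z -> Om' (F z))
  (GOm' : forall z, Om' z -> Om (G z)) (FK : cancel F G)
  (F_lip : lipschitz2 F) (G_lip : lipschitz2 G) (T_lip : lipschitz2 T)
  (T_adj : forall v a b, dot2 (T v) (sub2 a b) = mu * dot2 v (sub2 (G a) (G b))).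

Lemma reg_normal_transfer zb v : reg_normal Om zb v -> reg_normal Om' (F zb) (T v).
Proof.
move=> v_normal eps eps_gt0; have [K K_gt0 GK] := G_lip.
have [d d_gt0 vd] := v_normal (eps / (mu * K)) (divr_gt0 eps_gt0 (mulr_gt0 mu_gt0 K_gt0)).
exists (d / K) => [|z Om'z zd]; first exact: divr_gt0.
have Gz_le : enorm2 (sub2 (G z) zb) <= K * enorm2 (sub2 z (F zb)) by rewrite -{1}(FK zb).
have Gz_lt : enorm2 (sub2 (G z) zb) < d.
  by apply: le_lt_trans Gz_le _; rewrite -ltr_pdivlMl // mulrC.
rewrite T_adj FK; apply: le_trans (ler_wpM2l (ltW mu_gt0) (vd _ (GOm' Om'z) Gz_lt)) _.
have -> : mu * (eps / (mu * K) * enorm2 (sub2 (G z) zb)) = eps / K * enorm2 (sub2 (G z) zb).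
  by field; rewrite !gt_eqF.
apply: le_trans (ler_wpM2l _ Gz_le) _; first by rewrite ltW ?divr_gt0.
by rewrite mulrA divfK ?gt_eqF.
Qed.

Lemma lim_normal_transfer zb v : lim_normal Om zb v -> lim_normal Om' (F zb) (T v).
Proof.
move=> [zs [vs [Om_zs [vs_normal [zs_cvg vs_cvg]]]]].
exists (F \o zs), (T \o vs); split => [k|]; first exact: FOm.
split => [k|]; first exact: reg_normal_transfer.
have lip_cvg (f : V * V -> V * V) s l : lipschitz2 f -> cvg2 s l -> cvg2 (f \o s) (f l).
  move=> [K K_gt0 fK] s_cvg eps eps_gt0; have [N sN] := s_cvg (eps / K) (divr_gt0 eps_gt0 K_gt0).
  by exists N => k Nk; apply: le_lt_trans (fK _ _) _; rewrite -ltr_pdivlMl // mulrC sN.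
by split; apply: lip_cvg.
Qed.

End NormalConeTransfer.
End Pairs.

(** * Lower semicontinuity *)

Lemma ler_of_forall_lerDt (R : realFieldType) (a b C : R) : 0 <= C ->
  (forall t, 0 < t -> t <= 1 -> a <= b + t * C) -> a <= b.
Proof.
move=> C_ge0 abt; apply/ler_addgt0Pr => e e_gt0.
pose t := Num.min 1 (e / (C + 1)).
have t_gt0 : 0 < t by rewrite lt_min ltr01 divr_gt0 //; lra.
apply: le_trans (abt t t_gt0 _) _; rewrite ?ge_min ?lexx // lerD2l.
apply: le_trans (_ : e / (C + 1) * C <= e).
  by rewrite ler_wpM2r // ge_min lexx orbT.
by rewrite mulrAC ler_pdivrMr ?ler_pM2l; lra.
Qed.

Lemma lte_EFin_gap (R : realType) (a : R) (x : \bar R) :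
  (a%:E < x)%E -> exists2 e : R, 0 < e & ((a + e)%:E < x)%E.
Proof.
case: x => [r| |] //= ar; last by exists 1; rewrite ?ltry.
by rewrite lte_fin in ar; exists ((r - a) / 2); rewrite ?lte_fin; lra.
Qed.

Section Semicontinuity.
Variables (R : realType) (n : nat).
Local Notation V := 'cV[R]_n.
Implicit Types (f : V -> \bar R) (q : V -> R).

Lemma lsc_addr f q : lsc f -> lsc (fun y => (q y)%:E) -> lsc (fun y => f y + (q y)%:E)%E.
Proof.
move=> f_lsc q_lsc x a; rewrite -lteBlDr // -EFinB => /lte_EFin_gap[e e_gt0 /f_lsc[d1 d1_gt0 fd1]].
have [d2 d2_gt0 qd2] : exists2 d2, 0 < d2 & forall y, enorm (y - x) < d2 -> (q x - e < q y).
  by have [|d2 ? qd2] := q_lsc x (q x - e); [rewrite lte_fin; lra | exists d2].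

exists (Num.min d1 d2) => [|y]; first by rewrite lt_min d1_gt0.
rewrite lt_min => /andP[/fd1 fy /qd2 qy].
have := lteD fy (qy : ((q x - e)%:E < (q y)%:E)%E).
by rewrite -EFinD; congr (_ < _)%E; congr EFin; ring.
Qed.

Lemma lsc_le_of_cvg f (ys : nat -> V) (l : V) (m : R) (eps : nat -> R) : lsc f ->
  (forall e, 0 < e -> exists N, forall k, (N <= k)%N -> enorm (ys k - l) < e) ->
  (forall e, 0 < e -> exists N, forall k, (N <= k)%N -> eps k < e) ->
  (forall k, (f (ys k) <= (m + eps k)%:E)%E) -> (f l <= m%:E)%E.
Proof.
move=> f_lsc ys_cvg eps_cvg f_ys; rewrite leNgt; apply/negP.
move=> /lte_EFin_gap[e e_gt0 /f_lsc[d d_gt0 fd]].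
have [N1 ysN1] := ys_cvg d d_gt0; have [N2 epsN2] := eps_cvg e e_gt0.
have := fd _ (ysN1 _ (leq_maxl N1 N2)).
have := f_ys (maxn N1 N2); have := epsN2 _ (leq_maxr N1 N2).
case: (f _) => [r| |] //=; rewrite ?lte_fin ?lee_fin; lra.
Qed.

(* Convexity propagates the lower bound [r0 - 1] that lower semicontinuity gives on a ball around
   [x0] to an affine-in-the-norm lower bound on the whole space. *)
Lemma proper_lsc_convex_lb (g : V -> \bar R) : proper_fun g -> lsc g -> convex_fun g ->
  exists C D, 0 <= D /\ forall y, ((C - D * enorm y)%:E <= g y)%E.
Proof.
move=> [[x0 gx0_lt] g_gt] g_lsc g_cvx.
have [r0 gx0] : exists r0, g x0 = r0%:E.
  by move: gx0_lt (g_gt x0); case: (g x0) => // r0; exists r0.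
have [d d_gt0 gd] : exists2 d, 0 < d & forall y, enorm (y - x0) < d -> ((r0 - 1)%:E < g y)%E.
  by apply: g_lsc; rewrite gx0 lte_fin; lra.
have D_ge0 : 0 <= 2 / d by rewrite divr_ge0 ?ltW.
suff lb_x0 y : ((r0 - 1 - 2 / d * enorm (y - x0))%:E <= g y)%E.
  exists (r0 - 1 - 2 / d * enorm x0), (2 / d); split => // y.
  apply: le_trans (lb_x0 y); rewrite lee_fin.
  by have := ler_wpM2l D_ge0 (enormD y (- x0)); rewrite enormN; lra.
case gy : (g y) => [r| |]; [|by rewrite leey|by have := g_gt y; rewrite gy].
rewrite lee_fin; set s := enorm (y - x0).
have [s_lt|s_ge] := ltP s d.
  have : 0 <= 2 / d * s by rewrite mulr_ge0 ?enorm_ge0.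
  by have := gd y s_lt; rewrite gy lte_fin; lra.
have s_gt0 : 0 < s by exact: lt_le_trans s_ge.
pose t := d / (2 * s).
have t_gt0 : 0 < t by rewrite divr_gt0 ?mulr_gt0.
have t01 : 0 <= t <= 1 by rewrite ltW // ler_pdivrMr ?mulr_gt0 //; lra.
have z_near : enorm (t *: y + (1 - t) *: x0 - x0) < d.
  have -> : t *: y + (1 - t) *: x0 - x0 = t *: (y - x0).
    by apply/matrixP => i j; rewrite !mxE; ring.
  rewrite enormZ ger0_norm ?ltW // -/s /t.
  have -> : d / (2 * s) * s = d / 2 by field; rewrite gt_eqF.
  lra.
have := lt_le_trans (gd _ z_near) (g_cvx y x0 t t01).
rewrite gy gx0 -!EFinM -EFinD lte_fin => conv_lb.
have ts : t * (2 / d * s) = 1 by rewrite /t; field; rewrite !gt_eqF.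
suff : t * (r0 - 1 - 2 / d * s) <= t * r by rewrite ler_pM2l.
lra.
Qed.

Lemma lsc_scaled_sqr_enormB (k : R) (u : V) : 0 <= k ->
  lsc (fun y => (k * enorm (y - u) ^+ 2)%:E).
Proof.
move=> k_ge0 x a; set r := enorm (x - u); rewrite lte_fin => a_lt.
have kr_ge0 : 0 <= 2 * k * r by rewrite !mulr_ge0 ?enorm_ge0.
pose d := (k * r ^+ 2 - a) / (2 * k * r + 1).
have dE : (2 * k * r + 1) * d = k * r ^+ 2 - a by rewrite mulrC divfK // gt_eqF //; lra.
exists d => [|y yd]; first by apply: divr_gt0; lra.
have sqr_ge : r ^+ 2 - 2 * r * enorm (y - x) <= enorm (y - u) ^+ 2.
  have -> : y - u = (x - u) + (y - x) by rewrite (addrC (x - u)) addrA subrK.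
  rewrite /r; move: (x - u) (y - x) => p q.
  rewrite !enorm_sqr dotDl !dotDr (dotC q p) -mulrA.
  have := normr_dot_le p q; rewrite ler_norml => /andP[pq_ge _].
  by have := dotvv_ge0 q; lra.
have := ler_wpM2l k_ge0 sqr_ge; have := ler_wpM2l kr_ge0 (ltW yd).
by rewrite lte_fin; nra.
Qed.

End Semicontinuity.

(** * The proximal map and the Moreau envelope *)

Lemma eventually_invSn_lt (R : realType) (e : R) : 0 < e ->
  exists N, forall k, (N <= k)%N -> (k.+1%:R)^-1 < e.
Proof.
move=> e_gt0; exists (Num.truncn e^-1) => k Nk.
rewrite invf_plt ?posrE ?ltr0Sn //; apply: lt_le_trans (truncnS_gt _) _.
by rewrite ler_nat ltnS.
Qed.

Section MoreauEnvelope.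
Variables (R : realType) (n : nat) (g : 'cV[R]_n -> \bar R) (gamma : R).
Hypotheses (g_proper : proper_fun g) (g_lsc : lsc g) (g_cvx : convex_fun g)
  (gamma_gt0 : 0 < gamma).
Local Notation V := 'cV[R]_n.
Implicit Types (u p v y h : V).

Definition moreau_obj (u y : V) : \bar R :=
  (g y + ((2 * gamma)^-1 * enorm (y - u) ^+ 2)%:E)%E.

Definition moreau_argmin u p : Prop := forall y, (moreau_obj u p <= moreau_obj u y)%E.

Let inv2gamma_gt0 : 0 < (2 * gamma)^-1.
Proof. by rewrite invr_gt0 mulr_gt0. Qed.

Lemma moreau_obj_EFin u y (a : R) : (moreau_obj u y <= a%:E)%E -> exists r, moreau_obj u y = r%:E.
Proof. by rewrite /moreau_obj; case: (g y) (g_proper.2 y) => [r| |] //= _ _; eexists. Qed.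

Lemma moreau_argmin_EFin u p : moreau_argmin u p ->
  exists r, moreau_obj u p = r%:E.
Proof.
have [[x0 gx0_lt] g_gt] := g_proper.
have [r0 gx0] : exists r0, g x0 = r0%:E by move: gx0_lt (g_gt x0); case: (g x0) => // r0; exists r0.
by move=> /(_ x0); rewrite /moreau_obj gx0 -EFinD => /moreau_obj_EFin.
Qed.

Lemma moreau_obj_lb u : exists m : R, forall y, (m%:E <= moreau_obj u y)%E.
Proof.
have [C [D [D_ge0 g_ge]]] := proper_lsc_convex_lb g_proper g_lsc g_cvx.
exists (C - D * enorm u - gamma * D ^+ 2 / 2) => y.
have := g_ge y; rewrite /moreau_obj.
case: (g y) (g_proper.2 y) => [r| |] //= _; last by rewrite addye ?leey.
rewrite -EFinD !lee_fin; set s := enorm (y - u) => r_ge.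
have := ler_wpM2l D_ge0 (le_trans (enormD (y - u) u) (lexx _)); rewrite subrK -/s.
have sqr_ge : 0 <= (2 * gamma)^-1 * (s - gamma * D) ^+ 2.
  by rewrite mulr_ge0 ?sqr_ge0 ?(ltW inv2gamma_gt0).
have sqrE : (2 * gamma)^-1 * (s - gamma * D) ^+ 2 =
    (2 * gamma)^-1 * s ^+ 2 - D * s + gamma * D ^+ 2 / 2 by field; rewrite gt_eqF.
by rewrite sqrE in sqr_ge; lra.
Qed.

Lemma moreau_fin u : moreau gamma g u \is a fin_num.
Proof.
have [m m_le] := moreau_obj_lb u; have [[x0 gx0_lt] _] := g_proper.
apply: fin_real; apply/andP; split.
  by apply: lt_le_trans (ltNyr m) _; apply/ereal_infP => _ [y _ <-]; exact: m_le.
apply: le_lt_trans (ereal_inf_lbound (ex_intro2 _ _ x0 I erefl)) _.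
by rewrite /moreau_obj; move: gx0_lt; case: (g x0) => // r _; rewrite -EFinD ltry.
Qed.

Lemma moreau_obj_strong_cvx u y1 y2 (r1 r2 t : R) : 0 <= t <= 1 ->
  moreau_obj u y1 = r1%:E -> moreau_obj u y2 = r2%:E ->
  (moreau_obj u (t *: y1 + (1 - t) *: y2) <=
   (t * r1 + (1 - t) * r2 - t * (1 - t) * ((2 * gamma)^-1 * enorm (y1 - y2) ^+ 2))%:E)%E.
Proof.
move=> t01 y1E y2E.
have gE y r : moreau_obj u y = r%:E -> g y = (r - (2 * gamma)^-1 * enorm (y - u) ^+ 2)%:E.
  by rewrite /moreau_obj; case: (g y) => //= s [<-]; rewrite addrK.
have := g_cvx y1 y2 t01; rewrite (gE _ _ y1E) (gE _ _ y2E) -!EFinM -EFinD.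
move=> /(leeD2r ((2 * gamma)^-1 * enorm (t *: y1 + (1 - t) *: y2 - u) ^+ 2)%:E).
rewrite -EFinD => /le_trans; apply; rewrite lee_fin enorm_combo_sqr.
by rewrite le_eqVlt; apply/orP; left; apply/eqP; ring.
Qed.

Lemma moreau_argmin_growth u p : moreau_argmin u p ->
  forall y, (moreau_obj u p + ((2 * gamma)^-1 * enorm (y - p) ^+ 2)%:E <= moreau_obj u y)%E.
Proof.
move=> p_min y; have [rp pE] := moreau_argmin_EFin p_min.
case yE : (moreau_obj u y) => [ry| |]; [|by rewrite leey|by have := p_min y; rewrite yE pE].
rewrite pE -EFinD lee_fin; set D := _ * _ ^+ 2.
apply: (@ler_of_forall_lerDt _ _ _ D) => [|t t_gt0 t_le1].
  by rewrite /D mulr_ge0 ?sqr_ge0 ?(ltW inv2gamma_gt0).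
have t01 : 0 <= t <= 1 by rewrite ltW.
have := le_trans (p_min _) (moreau_obj_strong_cvx t01 yE pE); rewrite pE lee_fin -/D => conv.
suff : t * (rp + D) <= t * (ry + t * D) by rewrite ler_pM2l.
nra.
Qed.

Lemma sqr_dist_split u p y :
  (2 * gamma)^-1 * enorm (y - u) ^+ 2 + dot (gamma^-1 *: (u - p)) (y - p) =
  (2 * gamma)^-1 * enorm (p - u) ^+ 2 + (2 * gamma)^-1 * enorm (y - p) ^+ 2.
Proof.
rewrite !enorm_sqr /dot !mulr_sumr -!big_split /=.
by apply: eq_bigr => i _; rewrite !mxE; field; rewrite gt_eqF.
Qed.

Lemma subdiff_of_moreau_argmin u p : moreau_argmin u p ->
  subdiff g p (gamma^-1 *: (u - p)).
Proof.
move=> p_min; have [rp] := moreau_argmin_EFin p_min.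
rewrite /moreau_obj; case gp : (g p) => [r| |] //= _.
split => [|y]; first by rewrite gp.
have := moreau_argmin_growth p_min y; rewrite /moreau_obj gp.
case: (g y) (g_proper.2 y) => [ry| |] //= _; last by move=> _; rewrite leey.
by rewrite -!EFinD !lee_fin; have := sqr_dist_split u p y; lra.
Qed.

Lemma moreau_argmin_of_subdiff p v : subdiff g p v -> moreau_argmin (p + gamma *: v) p.
Proof.
move=> [gp_fin v_sub] y; have := v_sub y; rewrite /moreau_obj -(fineK gp_fin).
case: (g y) => [ry| |] //=; last by rewrite addye ?leey.
have := sqr_dist_split (p + gamma *: v) p y.
rewrite addrAC subrr add0r scalerA mulVf ?gt_eqF // scale1r.
by rewrite -!EFinD !lee_fin; have := mulr_ge0 (ltW inv2gamma_gt0) (sqr_ge0 (enorm (y - p))); lra.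
Qed.

Lemma moreau_argmin_unique u p1 p2 : moreau_argmin u p1 -> moreau_argmin u p2 -> p1 = p2.
Proof.
move=> p1_min p2_min; have [r1 p1E] := moreau_argmin_EFin p1_min.
have := le_trans (moreau_argmin_growth p1_min p2) (p2_min p1).
rewrite p1E -EFinD lee_fin gerDl pmulr_rle0 // => sqr_le0.
by apply/esym/subr0_eq/enorm_eq0/eqP; rewrite -sqrf_eq0 eq_le sqr_le0 sqr_ge0.
Qed.

Lemma moreau_obj_near_min_dist u (m e1 e2 : R) y1 y2 :
  (forall y, (m%:E <= moreau_obj u y)%E) ->
  (moreau_obj u y1 <= (m + e1)%:E)%E -> (moreau_obj u y2 <= (m + e2)%:E)%E ->
  enorm (y1 - y2) ^+ 2 <= 4 * gamma * (e1 + e2).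
Proof.
move=> m_le y1_le y2_le.
have [r1 y1E] := moreau_obj_EFin y1_le; have [r2 y2E] := moreau_obj_EFin y2_le.
have half01 : 0 <= (2 : R)^-1 <= 1 by apply/andP; split; lra.
have := le_trans (m_le _) (moreau_obj_strong_cvx half01 y1E y2E).
move: y1_le y2_le; rewrite y1E y2E !lee_fin; set D := enorm _ ^+ 2 => le1 le2 le_mid.
have : 2^-1 * (1 - 2^-1) * ((2 * gamma)^-1 * D) <= 2^-1 * (e1 + e2) by lra.
have -> : 2^-1 * (1 - 2^-1) * ((2 * gamma)^-1 * D) = D / (8 * gamma) by field; rewrite gt_eqF.
rewrite ler_pdivrMr ?mulr_gt0 // => /le_trans; apply.
by rewrite le_eqVlt; apply/orP; left; apply/eqP; field.
Qed.

Lemma exists_moreau_argmin u : exists p, moreau_argmin u p.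
Proof.
have mE := fineK (moreau_fin u); set m := fine _ in mE.
have m_le y : (m%:E <= moreau_obj u y)%E by rewrite mE; apply: ereal_inf_lbound; exists y.
have near_min k : exists y, (moreau_obj u y <= (m + k.+1%:R^-1)%:E)%E.
  have k_gt0 : 0 < k.+1%:R^-1 :> R by rewrite invr_gt0.
  have [_ [y _ <-] y_lt] := lb_ereal_inf_adherent k_gt0 (moreau_fin u).
  by exists y; rewrite EFinD mE; exact: ltW.
have [ys ys_near] := choice near_min.
have ys_cauchy e : 0 < e -> exists N, forall j k, (N <= j)%N -> (N <= k)%N ->
    enorm (ys j - ys k) < e.
  move=> e_gt0; set W := e ^+ 2 / (8 * gamma).
  have W_gt0 : 0 < W by rewrite divr_gt0 ?exprn_gt0 ?mulr_gt0.
  have [N invN] := eventually_invSn_lt W_gt0.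
  exists N => j k Nj Nk; rewrite -ltr_sqr ?nnegrE ?enorm_ge0 ?ltW //.
  apply: le_lt_trans (moreau_obj_near_min_dist m_le (ys_near j) (ys_near k)) _.
  have : 4 * gamma * (j.+1%:R^-1 + k.+1%:R^-1) < 4 * gamma * (2 * W).
    rewrite ltr_pM2l ?mulr_gt0 //; have := invN j Nj; have := invN k Nk.
    by move: (j.+1%:R^-1) (k.+1%:R^-1) => a b; lra.
  suff -> : 4 * gamma * (2 * W) = e ^+ 2 by [].
  by rewrite /W; field; rewrite gt_eqF.
have [l ys_cvg] := enorm_cauchy_cvg ys_cauchy.
exists l => y; apply: le_trans (m_le y).
apply: lsc_le_of_cvg ys_cvg (@eventually_invSn_lt _) ys_near; rewrite /moreau_obj.
exact (lsc_addr g_lsc (lsc_scaled_sqr_enormB (u := u) (ltW inv2gamma_gt0))).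
Qed.

Lemma prox_argmin u : moreau_argmin u (prox gamma g u).
Proof. exact: (xgetPex 0 (exists_moreau_argmin u)). Qed.

Lemma moreau_prox u : moreau gamma g u = moreau_obj u (prox gamma g u).
Proof.
apply/eqP; rewrite eq_le; apply/andP; split; first by apply: ereal_inf_lbound; eexists.
by apply/ereal_infP => _ [y _ <-]; exact: prox_argmin.
Qed.

Lemma prox_subdiff u : subdiff g (prox gamma g u) (gamma^-1 *: (u - prox gamma g u)).
Proof. exact/subdiff_of_moreau_argmin/prox_argmin. Qed.

Lemma prox_of_subdiff p v : subdiff g p v -> prox gamma g (p + gamma *: v) = p.
Proof. by move/moreau_argmin_of_subdiff; apply: moreau_argmin_unique; exact: prox_argmin. Qed.

Lemma moreau_obj_shift u h y : moreau_obj (u + h) y =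
  (moreau_obj u y + (dot (gamma^-1 *: (u - y)) h + (2 * gamma)^-1 * enorm h ^+ 2)%:E)%E.
Proof.
rewrite /moreau_obj -addeA -EFinD; congr (_ + EFin _)%E.
rewrite !enorm_sqr /dot !mulr_sumr -!big_split /=.
by apply: eq_bigr => i _; rewrite !mxE; field; rewrite gt_eqF.
Qed.

Lemma sqr_dist_shift u p y h :
  (2 * gamma)^-1 * enorm (y - p) ^+ 2 + dot (gamma^-1 *: (u - y)) h
    + (2 * gamma)^-1 * enorm h ^+ 2 =
  dot (gamma^-1 *: (u - p)) h + (2 * gamma)^-1 * enorm (y - p - h) ^+ 2.
Proof.
rewrite !enorm_sqr /dot !mulr_sumr -!big_split /=.
by apply: eq_bigr => i _; rewrite !mxE; field; rewrite gt_eqF.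
Qed.

Lemma moreau_expansion u h :
  0 <= fine (moreau gamma g (u + h)) - fine (moreau gamma g u)
         - dot (gamma^-1 *: (u - prox gamma g u)) h <= (2 * gamma)^-1 * enorm h ^+ 2.
Proof.
set p := prox gamma g u; set p1 := prox gamma g (u + h).
have [rp pE] := moreau_argmin_EFin (prox_argmin u).
have [r1 p1E] := moreau_argmin_EFin (prox_argmin (u + h)).
rewrite !moreau_prox -/p -/p1 pE p1E /=.
have upper := prox_argmin (u + h) p.
rewrite -/p1 p1E moreau_obj_shift pE -EFinD lee_fin in upper.
have [s p1uE] : exists s, moreau_obj u p1 = s%:E.
  by move: p1E; rewrite moreau_obj_shift; case: (moreau_obj u p1) => // s _; exists s.
rewrite moreau_obj_shift p1uE -EFinD -/p1 in p1E; case: p1E => p1E.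
have := moreau_argmin_growth (prox_argmin u) p1; rewrite -/p pE p1uE -EFinD lee_fin => lower.
have := sqr_dist_shift u p p1 h.
have := mulr_ge0 (ltW inv2gamma_gt0) (sqr_ge0 (enorm (p1 - p - h))).
by clearbody p p1; move=> *; apply/andP; split; lra.
Qed.

End MoreauEnvelope.

(** * Gradients *)

Section Gradient.
Variables (R : realType) (n : nat).
Local Notation V := 'cV[R]_n.
Implicit Types (f : V -> R) (x v h : V).

Lemma is_grad_of_sqr_remainder f x v (C : R) : 0 <= C ->
  (forall h, `|f (x + h) - f x - dot v h| <= C * enorm h ^+ 2) -> is_grad f x v.
Proof.
move=> C_ge0 rem_le eps eps_gt0.
exists (eps / (C + 1)) => [|h hd]; first by rewrite divr_gt0 //; lra.
apply: le_trans (rem_le h) _; rewrite expr2 mulrA ler_wpM2r ?enorm_ge0 //.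
apply: le_trans (ler_wpM2l C_ge0 (ltW hd)) _.
by rewrite mulrCA -[leRHS]mulr1 ler_wpM2l ?(ltW eps_gt0) // ler_pdivrMr; lra.
Qed.

Lemma is_grad_unique f x v1 v2 : is_grad f x v1 -> is_grad f x v2 -> v1 = v2.
Proof.
move=> grad1 grad2; apply/subr0_eq/enorm_eq0/eqP; rewrite eq_le enorm_ge0 andbT.
set d := v1 - v2; set N := enorm d.
have [N0|N_gt0] := eqVneq N 0; first by rewrite N0.
have {N_gt0} N_gt0 : 0 < N by rewrite lt_def N_gt0 enorm_ge0.
apply/ler_addgt0Pr => e e_gt0; rewrite add0r; have e2_gt0 : 0 < e / 2 by rewrite divr_gt0.
have [d1 d1_gt0 rem1] := grad1 _ e2_gt0; have [d2 d2_gt0 rem2] := grad2 _ e2_gt0.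
pose s := Num.min d1 d2 / 2 / N.
have s_gt0 : 0 < s by rewrite !divr_gt0 // lt_min d1_gt0.
have hE : enorm (s *: d) = Num.min d1 d2 / 2 by rewrite enormZ gtr0_norm // divfK ?gt_eqF.
have : enorm (s *: d) < Num.min d1 d2.
  by rewrite hE ltr_pdivrMr // ltr_pMr ?ltr1n // lt_min d1_gt0.
rewrite lt_min => /andP[/rem1 + /rem2]; rewrite !ler_norml => /andP[le1 _] /andP[_ le2].
have : dot d (s *: d) <= e * enorm (s *: d) by rewrite dotBl; lra.
by rewrite dotZr -enorm_sqr enormZ gtr0_norm // -/N [e * _]mulrCA ler_pM2l // expr2 ler_pM2r.
Qed.

Lemma grad_eq f x v : is_grad f x v -> grad f x = v.
Proof. by move=> fv; exact: is_grad_unique (xgetPex 0 (ex_intro _ v fv)) fv. Qed.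

End Gradient.

Section MoreauQuadratic.
Variables (R : realType) (n : nat) (g : 'cV[R]_n -> \bar R) (gamma : R)
  (Q : 'M[R]_n) (c : 'cV[R]_n).
Hypotheses (g_proper : proper_fun g) (g_lsc : lsc g) (g_cvx : convex_fun g)
  (gamma_gt0 : 0 < gamma) (Q_sym : Q^T = Q).
Local Notation V := 'cV[R]_n.

Definition moreau_quad (u : V) : R :=
  2^-1 * dot ((Q - 1%:M) *m u) u + dot c u + gamma * fine (moreau gamma g u).

Lemma moreau_quad_remainder u h : moreau_quad (u + h) - moreau_quad u
    - dot (Q *m u + c - prox gamma g u) h =
  2^-1 * dot ((Q - 1%:M) *m h) h +
  gamma * (fine (moreau gamma g (u + h)) - fine (moreau gamma g u)
           - dot (gamma^-1 *: (u - prox gamma g u)) h).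
Proof.
set P := Q - 1%:M.
have P_sym : dot (P *m h) u = dot (P *m u) h.
  by rewrite dot_mulmx linearB /= trmx1 Q_sym dotC.
have Q_split : Q *m u = P *m u + u by rewrite mulmxBl mul1mx subrK.
rewrite /moreau_quad -/P mulmxDr !dotDl !dotDr P_sym Q_split !dotDl dotNl dotZl dotBl.
by field; rewrite gt_eqF.
Qed.

Lemma grad_moreau_quad u : grad moreau_quad u = Q *m u + c - prox gamma g u.
Proof.
apply/grad_eq; have [K K_ge0 PK] := enorm_mulmx_le (Q - 1%:M).
apply: (@is_grad_of_sqr_remainder _ _ _ _ _ ((K + 1) / 2)) => [|h].
  by rewrite divr_ge0 ?addr_ge0.
rewrite moreau_quad_remainder.
have /andP[rem_ge0 rem_le] := moreau_expansion g_proper g_lsc g_cvx gamma_gt0 u h.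
have := ler_wpM2l (ltW gamma_gt0) rem_ge0; have := ler_wpM2l (ltW gamma_gt0) rem_le.
have -> : gamma * ((2 * gamma)^-1 * enorm h ^+ 2) = 2^-1 * enorm h ^+ 2 by field; rewrite gt_eqF.
have := le_trans (normr_dot_le _ _) (ler_wpM2r (enorm_ge0 h) (PK h)).
rewrite ler_norml mulr0 -mulrA -expr2 => /andP[quad_ge quad_le] rem_le' rem_ge0'.
by rewrite ler_norml; apply/andP; split; lra.
Qed.

End MoreauQuadratic.

(** * The graph of [grad psi] and the graph of [subdiff g] *)

Section ProxGraph.
Variables (R : realType) (n : nat) (g : 'cV[R]_n -> \bar R) (gamma : R)
  (Q : 'M[R]_n) (c : 'cV[R]_n).
Hypotheses (g_proper : proper_fun g) (g_lsc : lsc g) (g_cvx : convex_fun g)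
  (gamma_gt0 : 0 < gamma) (Q_sym : Q^T = Q).
Local Notation V := 'cV[R]_n.
Local Notation P := (Q - 1%:M).
Implicit Types (z a b v : V * V).

Definition grad_graph : set (V * V) := [set z | z.2 = grad (moreau_quad g gamma Q c) z.1].
Definition subdiff_graph : set (V * V) := [set z | subdiff g z.1 z.2].

Definition grad_to_subdiff z : V * V :=
  (Q *m z.1 + c - z.2, gamma^-1 *: (z.1 - (Q *m z.1 + c - z.2))).
Definition subdiff_to_grad z : V * V :=
  (z.1 + gamma *: z.2, Q *m (z.1 + gamma *: z.2) + c - z.1).

Let gamma_neq0 : gamma != 0. Proof. by rewrite gt_eqF. Qed.
Let grad_quad x : grad (moreau_quad g gamma Q c) x = Q *m x + c - prox gamma g x.
Proof. exact: grad_moreau_quad. Qed.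

Lemma grad_to_subdiffK : cancel grad_to_subdiff subdiff_to_grad.
Proof.
move=> [x y]; rewrite /subdiff_to_grad /grad_to_subdiff /= scalerA mulfV // scale1r.
by rewrite addrC subrK opprB addrC subrK.
Qed.

Lemma subdiff_to_gradK : cancel subdiff_to_grad grad_to_subdiff.
Proof.
move=> [p v]; rewrite /subdiff_to_grad /grad_to_subdiff /= opprB addrC subrK.
by rewrite addrC addKr scalerA mulVf // scale1r.
Qed.

Lemma grad_to_subdiff_graph z : grad_graph z -> subdiff_graph (grad_to_subdiff z).
Proof.
case: z => x y; rewrite /grad_graph /subdiff_graph /grad_to_subdiff /= grad_quad => ->.
by rewrite opprB addrC subrK; exact: prox_subdiff.
Qed.

Lemma subdiff_to_grad_graph z : subdiff_graph z -> grad_graph (subdiff_to_grad z).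
Proof.
case: z => p v; rewrite /grad_graph /subdiff_graph /subdiff_to_grad /= grad_quad => pv.
by rewrite prox_of_subdiff.
Qed.

Lemma sub2_grad_to_subdiff a b : sub2 (grad_to_subdiff a) (grad_to_subdiff b) =
  blockmul Q (- 1%:M) (gamma^-1 *: - P) (gamma^-1 *: 1%:M) (sub2 a b).
Proof.
case: a b => [a1 a2] [b1 b2]; rewrite /blockmul /sub2 /grad_to_subdiff /=; congr pair;
  rewrite -?scalemxAl !(mulmxDl, mulmxBl, mulmxBr, mulNmx, mul1mx);
  by apply/matrixP => i j; rewrite !mxE; ring.
Qed.

Lemma sub2_subdiff_to_grad a b : sub2 (subdiff_to_grad a) (subdiff_to_grad b) =
  blockmul 1%:M (gamma *: 1%:M) P (gamma *: Q) (sub2 a b).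
Proof.
case: a b => [a1 a2] [b1 b2]; rewrite /blockmul /sub2 /subdiff_to_grad /=; congr pair;
  rewrite !(mulmxDl, mulmxDr, mulmxBl, mulmxBr, mulmxN, mulNmx) -?scalemxAl -?scalemxAr ?mul1mx;
  by apply/matrixP => i j; rewrite !mxE; ring.
Qed.

(* [gamma^-1] and [gamma] times the transposed linear parts of [subdiff_to_grad] and
   [grad_to_subdiff] respectively. *)
Definition normal_to_subdiff v : V * V := (gamma^-1 *: (v.1 + P *m v.2), v.1 + Q *m v.2).
Definition normal_to_grad v : V * V := (gamma *: (Q *m v.1) - P *m v.2, v.2 - gamma *: v.1).

Lemma normal_to_subdiffK : cancel normal_to_subdiff normal_to_grad.
Proof.
case=> v1 v2; rewrite /normal_to_grad /normal_to_subdiff /= -scalemxAr !scalerA mulfV //.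
rewrite !scale1r.
rewrite !(mulmxDr, mulmxBl, mulmxBr, mulmxDl, mulmxN, mulNmx, mulmxA, mul1mx, mulmx1).
by congr pair; apply/matrixP => i j; rewrite !mxE; ring.
Qed.

Let P_sym : P^T = P.
Proof. by rewrite linearB /= trmx1 Q_sym. Qed.

Lemma dot2_normal_to_subdiff v a b : dot2 (normal_to_subdiff v) (sub2 a b) =
  gamma^-1 * dot2 v (sub2 (subdiff_to_grad a) (subdiff_to_grad b)).
Proof.
rewrite sub2_subdiff_to_grad; case: v (sub2 a b) => v1 v2 [d1 d2].
rewrite /dot2 /blockmul /normal_to_subdiff /= -!scalemxAl !mul1mx.
rewrite !(dotDl, dotDr, dotZl, dotZr) !dot_mulmx P_sym Q_sym.
by rewrite !mulrDr !mulrA mulVf // !mul1r; ring.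
Qed.

Lemma dot2_normal_to_grad v a b : dot2 (normal_to_grad v) (sub2 a b) =
  gamma * dot2 v (sub2 (grad_to_subdiff a) (grad_to_subdiff b)).
Proof.
rewrite sub2_grad_to_subdiff; case: v (sub2 a b) => v1 v2 [d1 d2].
rewrite /dot2 /blockmul /normal_to_grad /= -!scalemxAl !mulNmx !mul1mx.
rewrite !(dotDl, dotDr, dotBl, dotBr, dotZl, dotZr, dotNl, dotNr) !dot_mulmx P_sym Q_sym.
by rewrite !mulrDr !mulrN !mulrA mulfV // !mul1r; ring.
Qed.

Lemma lipschitz2_grad_to_subdiff : lipschitz2 grad_to_subdiff.
Proof. exact: lipschitz2_blockmul sub2_grad_to_subdiff. Qed.

Lemma lipschitz2_subdiff_to_grad : lipschitz2 subdiff_to_grad.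
Proof. exact: lipschitz2_blockmul sub2_subdiff_to_grad. Qed.

Lemma lipschitz2_normal_to_subdiff : lipschitz2 normal_to_subdiff.
Proof.
apply: (@lipschitz2_blockmul _ _ _ (gamma^-1 *: 1%:M) (gamma^-1 *: P) 1%:M Q).
move=> [a1 a2] [b1 b2]; rewrite /blockmul /sub2 /normal_to_subdiff /=; congr pair;
  rewrite -?scalemxAl !(mulmxDl, mulmxDr, mulmxBl, mulmxBr, mulmxN, mulNmx, mul1mx);
  by apply/matrixP => i j; rewrite !mxE; ring.
Qed.

Lemma lipschitz2_normal_to_grad : lipschitz2 normal_to_grad.
Proof.
apply: (@lipschitz2_blockmul _ _ _ (gamma *: Q) (- P) (- gamma *: 1%:M) 1%:M).
move=> [a1 a2] [b1 b2]; rewrite /blockmul /sub2 /normal_to_grad /=; congr pair;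
  rewrite -?scalemxAl !(mulmxDl, mulmxDr, mulmxBl, mulmxBr, mulmxN, mulNmx, mul1mx);
  by apply/matrixP => i j; rewrite !mxE; ring.
Qed.

Lemma lim_normal_grad_to_subdiff zb v : lim_normal grad_graph zb v ->
  lim_normal subdiff_graph (grad_to_subdiff zb) (normal_to_subdiff v).
Proof.
have inv_gamma_gt0 : 0 < gamma^-1 by rewrite invr_gt0.
exact: (lim_normal_transfer inv_gamma_gt0 grad_to_subdiff_graph subdiff_to_grad_graph
  grad_to_subdiffK lipschitz2_grad_to_subdiff lipschitz2_subdiff_to_grad
  lipschitz2_normal_to_subdiff dot2_normal_to_subdiff).
Qed.

Lemma lim_normal_subdiff_to_grad zb v : lim_normal subdiff_graph zb v ->
  lim_normal grad_graph (subdiff_to_grad zb) (normal_to_grad v).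
Proof.
exact: (lim_normal_transfer gamma_gt0 subdiff_to_grad_graph grad_to_subdiff_graph
  subdiff_to_gradK lipschitz2_subdiff_to_grad lipschitz2_grad_to_subdiff
  lipschitz2_normal_to_grad dot2_normal_to_grad).
Qed.

End ProxGraph.

Theorem lemma5p9 (R : realType) (n : nat) (A : 'M[R]_n) (b : 'cV[R]_n)
  (g : 'cV[R]_n -> \bar R) (gamma : R) :
  sym_mx A -> psd A ->
  proper_fun g -> lsc g -> convex_fun g ->
  0 < gamma -> pd (1%:M - gamma *: A) ->
  let Q := invmx (1%:M - gamma *: A) in
  let c := gamma *: (Q *m b) in
  let P := Q - 1%:M in
  let psi := fun u : 'cV[R]_n =>
    2^-1 * dot (P *m u) u + dot c u + gamma * fine (moreau gamma g u) in
  forall u w z : 'cV[R]_n,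
    hess2 psi u w z <->
    sub2diff g (prox gamma g u) (gamma^-1 *: (u - prox gamma g u))
      (Q *m w - z) (gamma^-1 *: (z - P *m w)).
Proof.
move=> A_sym _ g_proper g_lsc g_cvx gamma_gt0 _ Q c P psi u w z.
have Q_sym : Q^T = Q by rewrite trmx_inv linearB /= trmx1 linearZ /= A_sym.
have point_to_subdiff : grad_to_subdiff gamma Q c (u, grad psi u) =
    (prox gamma g u, gamma^-1 *: (u - prox gamma g u)).
  by rewrite /grad_to_subdiff /= grad_moreau_quad // opprB addrC subrK.
have normal_to_subdiffE : normal_to_subdiff gamma Q (z, - w) =
    (gamma^-1 *: (z - P *m w), - (Q *m w - z)).
  by rewrite /normal_to_subdiff /= !mulmxN opprB.
rewrite /hess2 /sub2diff /coderiv -point_to_subdiff -normal_to_subdiffE.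
split; first exact: lim_normal_grad_to_subdiff.
move=> /(lim_normal_subdiff_to_grad c g_proper g_lsc g_cvx gamma_gt0 Q_sym).
by rewrite (grad_to_subdiffK Q c gamma_gt0) (normal_to_subdiffK Q gamma_gt0).
Qed.
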